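(* Let $C=\{(s,t)\in\mathbb{Z}^\omega\times\mathbb{Z}^\omega\colon t_n\le s_n\le 0\text{ for every }n\in\omega\}$. Then: (a) for every $t\in\mathbb{Z}^\omega$ the section $\{s\in\mathbb{Z}^\omega\colon (s,t)\in C\}$ is Haar meager in $\mathbb{Z}^\omega$; (b) the set of those $s\in\mathbb{Z}^\omega$ for which the section $\{t\in\mathbb{Z}^\omega\colon (s,t)\in C\}$ is not Haar meager in $\mathbb{Z}^\omega$ is itself not Haar meager in $\mathbb{Z}^\omega$; (c) $C$ is not Haar meager in $\mathbb{Z}^\omega\times\mathbb{Z}^\omega$ (indeed $C$ contains a translate of every compact subset of $\mathbb{Z}^\omega\times\mathbb{Z}^\omega$).
   Context: $\mathbb{Z}^\omega$ is the abelian Polish group of all integer sequences with coordinatewise addition and the product topology (discrete topology on $\mathbb{Z}$). For an abelian Polish group $G$, a set $A\subseteq G$ is Haar meager if there exist a Borel set $B\supseteq A$, a compact metric space $K$ and a continuous map $f\colon K\to G$ such that $f^{-1}(x+B)$ is meager in $K$ for every $x\in G$. *)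

From Stdlib Require Import Reals ZArith List.
Open Scope R_scope.

Inductive Borel {G : Type} (isOpen : (G -> Prop) -> Prop) : (G -> Prop) -> Prop :=
| Borel_open : forall U, isOpen U -> Borel isOpen U
| Borel_compl : forall S, Borel isOpen S -> Borel isOpen (fun x => ~ S x)
| Borel_union : forall S : nat -> G -> Prop,
    (forall n, Borel isOpen (S n)) -> Borel isOpen (fun x => exists n, S n x)
| Borel_ext : forall S T, Borel isOpen S -> (forall x, S x <-> T x) -> Borel isOpen T.

Definition compact_in {G : Type} (isOpen : (G -> Prop) -> Prop) (S : G -> Prop) : Prop :=
  forall (I : Type) (U : I -> G -> Prop),
    (forall i, isOpen (U i)) ->
    (forall x, S x -> exists i, U i x) ->
    exists l : list I, forall x, S x -> exists i, In i l /\ U i x.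

Definition interior {G : Type} (isOpen : (G -> Prop) -> Prop) (S : G -> Prop) (x : G) : Prop :=
  exists U, isOpen U /\ U x /\ forall y, U y -> S y.

Definition closure {G : Type} (isOpen : (G -> Prop) -> Prop) (S : G -> Prop) (x : G) : Prop :=
  forall U, isOpen U -> U x -> exists y, U y /\ S y.

Definition nowhere_dense {G : Type} (isOpen : (G -> Prop) -> Prop) (N : G -> Prop) : Prop :=
  forall x, ~ interior isOpen (closure isOpen N) x.

Definition meager {G : Type} (isOpen : (G -> Prop) -> Prop) (S : G -> Prop) : Prop :=
  exists N : nat -> G -> Prop,
    (forall n, nowhere_dense isOpen (N n)) /\
    (forall x, S x -> exists n, N n x).

Record MetricSpace := {
  ms_carrier :> Type;
  ms_dist : ms_carrier -> ms_carrier -> R;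
  ms_dist_nonneg : forall x y, 0 <= ms_dist x y;
  ms_dist_eq0 : forall x y, ms_dist x y = 0 <-> x = y;
  ms_dist_sym : forall x y, ms_dist x y = ms_dist y x;
  ms_dist_tri : forall x y z, ms_dist x z <= ms_dist x y + ms_dist y z
}.

Definition ms_open (K : MetricSpace) (U : K -> Prop) : Prop :=
  forall x, U x -> exists eps, 0 < eps /\
    forall y, ms_dist K x y < eps -> U y.

Definition compact_metric (K : MetricSpace) : Prop :=
  compact_in (ms_open K) (fun _ => True).

Definition continuous_into (K : MetricSpace) {G : Type}
  (isOpen : (G -> Prop) -> Prop) (f : K -> G) : Prop :=
  forall U, isOpen U -> ms_open K (fun k => U (f k)).

Definition translate {G : Type} (add : G -> G -> G) (x : G) (B : G -> Prop) (y : G) : Prop :=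
  exists b, B b /\ y = add x b.

(* Darji's definition; the witnessing compact metric space K is nonempty. *)
Definition HaarMeager {G : Type} (add : G -> G -> G)
  (isOpen : (G -> Prop) -> Prop) (A : G -> Prop) : Prop :=
  exists B : G -> Prop,
    Borel isOpen B /\ (forall a, A a -> B a) /\
    exists (K : MetricSpace) (f : K -> G),
      compact_metric K /\ (exists k : K, True) /\
      continuous_into K isOpen f /\
      forall x : G, meager (ms_open K) (fun k => translate add x B (f k)).

Definition Zw := nat -> Z.

Definition addZw (x y : Zw) : Zw := fun n => (x n + y n)%Z.

(* product topology of discrete Z's: basic opens are cylinders *)
Definition openZw (U : Zw -> Prop) : Prop :=
  forall x, U x -> exists m : nat,
    forall y, (forall i, (i < m)%nat -> y i = x i) -> U y.

Definition addZw2 (p q : Zw * Zw) : Zw * Zw :=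
  (addZw (fst p) (fst q), addZw (snd p) (snd q)).

Definition openZw2 (U : Zw * Zw -> Prop) : Prop :=
  forall p, U p -> exists m : nat,
    forall q, (forall i, (i < m)%nat -> fst q i = fst p i /\ snd q i = snd p i) -> U q.

Definition HaarMeagerZw (A : Zw -> Prop) : Prop := HaarMeager addZw openZw A.
Definition HaarMeagerZw2 (A : Zw * Zw -> Prop) : Prop := HaarMeager addZw2 openZw2 A.

Definition Cset (p : Zw * Zw) : Prop :=
  forall n, (snd p n <= fst p n <= 0)%Z.

From Stdlib Require Import Reals ZArith List Lra Lia.
From Stdlib Require Import Classical ClassicalEpsilon FunctionalExtensionality.
Open Scope R_scope.

(* A compact subset of [Z^omega] (or of its square) is coordinatewise bounded, so it
   can be translated below any given point; hence every set containing a lower set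
   [{s | s <= s0}], in particular [C], contains a translate of every compactum.  By
   the Baire category theorem such a set is not Haar meager: a translate of a Borel
   hull would cover the whole compact witness space.  This gives (b) and (c).  For
   (a), each translate of the section [{s | t <= s <= 0}] of [C] meets the copy
   [{a * (|t| + 1) | a in 2^omega}] of the Cantor space in at most one point, and
   points are nowhere dense in the Cantor space. *)

Lemma half_pow_pos n : 0 < (1/2)^n.
Proof. apply pow_lt; lra. Qed.

Lemma half_pow_le m n : (m <= n)%nat -> (1/2)^n <= (1/2)^m.
Proof.
  induction 1 as [|n _ IH]; [lra|].
  simpl; pose proof (half_pow_pos n); lra.
Qed.

Lemma half_pow_lt_S m : (1/2)^(S m) < (1/2)^m.
Proof. simpl; pose proof (half_pow_pos m); lra. Qed.

Lemma half_pow_small eps : 0 < eps -> exists m, (1/2)^m < eps.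
Proof.
  intros Heps.
  destruct (pow_lt_1_zero (1/2)) with (y := eps) as [m Hm]; auto.
  { rewrite Rabs_right; lra. }
  exists m; specialize (Hm m (le_n _)).
  rewrite Rabs_right in Hm; auto; left; apply half_pow_pos.
Qed.

(** * Cantor space *)

Definition first_diff (a b : nat -> bool) (n : nat) : Prop :=
  a n <> b n /\ forall i, (i < n)%nat -> a i = b i.

Lemma first_diff_exists a b : a <> b -> exists n, first_diff a b n.
Proof.
  intros Hab.
  assert (Hn : exists n, a n <> b n).
  { apply NNPP; intros Hno; apply Hab, functional_extensionality; intros n.
    apply NNPP; eauto. }
  destruct Hn as [n Hn]; revert Hn.
  induction n as [n IH] using lt_wf_ind; intros Hn.
  destruct (classic (forall i, (i < n)%nat -> a i = b i)) as [Hlt|Hlt].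
  - exists n; split; auto.
  - apply not_all_ex_not in Hlt as [i Hi].
    apply imply_to_and in Hi as [Hin Hi]; eauto.
Qed.

Lemma first_diff_unique a b m n : first_diff a b m -> first_diff a b n -> m = n.
Proof.
  intros [Hm Hltm] [Hn Hltn].
  destruct (Nat.lt_trichotomy m n) as [L|[L|L]]; auto; exfalso.
  - exact (Hm (Hltn m L)).
  - exact (Hn (Hltm n L)).
Qed.

Lemma first_diff_sym a b n : first_diff a b n -> first_diff b a n.
Proof. intros [Hn Hlt]; split; auto; intros i Hi; symmetry; auto. Qed.

(* The ultrametric [2^-n] where [n] is the first index at which the sequences differ. *)
Definition cantor_dist (a b : nat -> bool) : R :=
  match excluded_middle_informative (a = b) with
  | left _ => 0
  | right Hab =>
      (1/2)^(proj1_sig (constructive_indefinite_description _ (first_diff_exists a b Hab)))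
  end.

Lemma cantor_distP a b :
  (a = b /\ cantor_dist a b = 0) \/
  (a <> b /\ exists n, first_diff a b n /\ cantor_dist a b = (1/2)^n).
Proof.
  unfold cantor_dist; destruct (excluded_middle_informative (a = b)) as [E|E].
  - left; auto.
  - right; split; auto.
    destruct (constructive_indefinite_description _ _) as [n Hn]; eauto.
Qed.

Lemma cantor_dist_nonneg a b : 0 <= cantor_dist a b.
Proof.
  destruct (cantor_distP a b) as [[_ ->]|[_ [n [_ ->]]]]; [lra|].
  left; apply half_pow_pos.
Qed.

Lemma cantor_dist_eq0 a b : cantor_dist a b = 0 <-> a = b.
Proof.
  destruct (cantor_distP a b) as [[Hab ->]|[Hab [n [_ ->]]]]; split; auto; intros H.
  - pose proof (half_pow_pos n); lra.
  - contradiction.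
Qed.

Lemma cantor_dist_sym a b : cantor_dist a b = cantor_dist b a.
Proof.
  destruct (cantor_distP a b) as [[Hab ->]|[Hab [n [Hn ->]]]];
  destruct (cantor_distP b a) as [[Hba ->]|[Hba [m [Hm ->]]]]; auto;
    try (subst; congruence).
  apply first_diff_sym in Hm; rewrite (first_diff_unique _ _ _ _ Hn Hm); auto.
Qed.

Lemma cantor_dist_tri a b c : cantor_dist a c <= cantor_dist a b + cantor_dist b c.
Proof.
  pose proof (cantor_dist_nonneg a b); pose proof (cantor_dist_nonneg b c).
  destruct (cantor_distP a c) as [[_ Eac]|[_ [n [[Hn _] Eac]]]]; rewrite Eac; [lra|].
  destruct (cantor_distP a b) as [[<- _]|[_ [p [[_ Hp] Eab]]]]; [lra|].
  destruct (cantor_distP b c) as [[<- _]|[_ [q [[_ Hq] Ebc]]]]; [lra|].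
  rewrite Eab, Ebc.
  destruct (le_lt_dec p n) as [L|L]; [pose proof (half_pow_le _ _ L); pose proof (half_pow_pos q); lra|].
  destruct (le_lt_dec q n) as [L'|L']; [pose proof (half_pow_le _ _ L'); pose proof (half_pow_pos p); lra|].
  exfalso; apply Hn; rewrite Hp, Hq; auto.
Qed.

Definition Cantor : MetricSpace :=
  Build_MetricSpace (nat -> bool) cantor_dist
    cantor_dist_nonneg cantor_dist_eq0 cantor_dist_sym cantor_dist_tri.

Definition agree (m : nat) (a b : nat -> bool) : Prop :=
  forall i, (i < m)%nat -> a i = b i.

Lemma agree_of_cantor_dist m a b : cantor_dist a b < (1/2)^m -> agree m a b.
Proof.
  intros Hd i Hi.
  destruct (cantor_distP a b) as [[-> _]|[_ [n [[_ Hn] E]]]]; auto.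
  apply Hn; destruct (le_lt_dec n m) as [L|L]; [|lia].
  pose proof (half_pow_le _ _ L); lra.
Qed.

Lemma cantor_dist_of_agree m a b : agree (S m) a b -> cantor_dist a b < (1/2)^m.
Proof.
  intros Hab.
  destruct (cantor_distP a b) as [[_ ->]|[_ [n [[Hn _] ->]]]]; [apply half_pow_pos|].
  destruct (le_lt_dec (S m) n) as [L|L].
  - pose proof (half_pow_le _ _ L); pose proof (half_pow_lt_S m); lra.
  - exfalso; exact (Hn (Hab n L)).
Qed.

Lemma agree_open m (a : nat -> bool) : ms_open Cantor (agree m a).
Proof.
  intros b Hb; exists ((1/2)^m); split; [apply half_pow_pos|].
  intros c Hc; apply agree_of_cantor_dist in Hc.
  intros i Hi; rewrite Hb, Hc; auto.
Qed.

Section CantorCompact.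

Variables (I : Type) (U : I -> (nat -> bool) -> Prop).

Definition extends (p : list bool) (a : nat -> bool) : Prop :=
  forall i, (i < length p)%nat -> a i = nth i p false.

Definition finitely_covered (p : list bool) : Prop :=
  exists l : list I, forall a, extends p a -> exists i, In i l /\ U i a.

Lemma extends_snoc p a : extends p a -> extends (p ++ a (length p) :: nil) a.
Proof.
  intros Hp i Hi; rewrite length_app in Hi; simpl in Hi.
  destruct (Nat.lt_ge_cases i (length p)).
  - rewrite app_nth1; auto.
  - replace i with (length p) by lia.
    rewrite app_nth2, Nat.sub_diag by lia; reflexivity.
Qed.

Lemma finitely_covered_snoc p :
  finitely_covered (p ++ false :: nil) -> finitely_covered (p ++ true :: nil) ->
  finitely_covered p.
Proof.
  intros [l0 H0] [l1 H1]; exists (l0 ++ l1); intros a Ha.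
  pose proof (extends_snoc _ _ Ha) as Ha'.
  destruct (a (length p)).
  - destruct (H1 a Ha') as [i [Hi Ui]]; exists i; split; auto; apply in_or_app; auto.
  - destruct (H0 a Ha') as [i [Hi Ui]]; exists i; split; auto; apply in_or_app; auto.
Qed.

(* König's lemma: extend a prefix by a bit keeping it not finitely covered. *)
Definition next_bit (p : list bool) : bool :=
  if excluded_middle_informative (finitely_covered (p ++ false :: nil)) then true else false.

Fixpoint bad_prefix (n : nat) : list bool :=
  match n with
  | 0 => nil
  | S n => bad_prefix n ++ next_bit (bad_prefix n) :: nil
  end.

Lemma bad_prefix_length n : length (bad_prefix n) = n.
Proof. induction n; simpl; auto; rewrite length_app, IHn; simpl; lia. Qed.

Lemma bad_prefix_nth n i :
  (i < n)%nat -> nth i (bad_prefix n) false = nth i (bad_prefix (S i)) false.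
Proof.
  induction n as [|n IH]; intros Hi; [lia|].
  destruct (Nat.lt_ge_cases i n).
  - simpl bad_prefix at 1; rewrite app_nth1 by (rewrite bad_prefix_length; auto); auto.
  - replace i with n by lia; reflexivity.
Qed.

Lemma bad_prefix_not_covered n :
  ~ finitely_covered nil -> ~ finitely_covered (bad_prefix n).
Proof.
  intros H0; induction n as [|n IH]; auto; simpl; unfold next_bit.
  destruct (excluded_middle_informative _) as [Hf|Hf]; auto.
  intros Ht; exact (IH (finitely_covered_snoc _ Hf Ht)).
Qed.

Definition bad_branch (n : nat) : bool := nth n (bad_prefix (S n)) false.

Lemma bad_branch_extends n : extends (bad_prefix n) bad_branch.
Proof.
  intros i Hi; rewrite bad_prefix_length in Hi.
  unfold bad_branch; symmetry; apply bad_prefix_nth; auto.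
Qed.

End CantorCompact.

Lemma Cantor_compact : compact_metric Cantor.
Proof.
  intros I U HU Hcov; apply NNPP; intros Hnot.
  assert (H0 : ~ finitely_covered I U nil).
  { intros [l Hl]; apply Hnot; exists l; intros a _; apply Hl.
    intros i Hi; simpl in Hi; lia. }
  destruct (Hcov (bad_branch I U) Logic.I) as [i Hi].
  destruct (HU i _ Hi) as [eps [Heps Hball]].
  destruct (half_pow_small eps Heps) as [m Hm].
  apply (bad_prefix_not_covered I U (S m) H0).
  exists (i :: nil); intros a Ha; exists i; split; [left; auto|].
  apply Hball; simpl; apply Rlt_trans with ((1/2)^m); auto.
  apply cantor_dist_of_agree; intros j Hj.
  pose proof (bad_branch_extends I U (S m) j) as Hb.
  specialize (Ha j); rewrite bad_prefix_length in Hb, Ha.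
  rewrite (Hb Hj), (Ha Hj); reflexivity.
Qed.

Lemma Cantor_subsingleton_nowhere_dense (P : Cantor -> Prop) :
  (forall a b, P a -> P b -> a = b) -> nowhere_dense (ms_open Cantor) P.
Proof.
  intros HP z [V [HV [Vz HVP]]].
  destruct (HV z Vz) as [eps [Heps Hball]].
  destruct (half_pow_small eps Heps) as [m Hm].
  (* [z'] flips bit [S m] of [z]; it stays in [V], and no single point of [P]
     can be close to both. *)
  set (z' := fun i => if Nat.eqb i (S m) then negb (z (S m)) else z i).
  assert (Vz' : V z').
  { apply Hball; simpl; apply Rlt_trans with ((1/2)^m); auto.
    apply cantor_dist_of_agree; intros i Hi; unfold z'.
    destruct (Nat.eqb_spec i (S m)); [lia|auto]. }
  destruct (HVP z Vz _ (agree_open (S (S m)) z)) as [p [Hp Pp]]; [intros i _; auto|].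
  destruct (HVP z' Vz' _ (agree_open (S (S m)) z')) as [q [Hq Pq]]; [intros i _; auto|].
  rewrite <- (HP _ _ Pp Pq) in Hq.
  specialize (Hp (S m) ltac:(lia)); specialize (Hq (S m) ltac:(lia)).
  unfold z' in Hq; rewrite Nat.eqb_refl, <- Hp in Hq.
  destruct (z (S m)); discriminate.
Qed.

(** * Baire category theorem for compact metric spaces *)

Section Baire.

Variable K : MetricSpace.

Lemma ball_open (x : K) r : ms_open K (fun z => ms_dist K x z < r).
Proof.
  intros z Hz; exists (r - ms_dist K x z); split; [lra|].
  intros w Hw; pose proof (ms_dist_tri K x z w); lra.
Qed.

Lemma ms_dist_refl (x : K) : ms_dist K x x = 0.
Proof. apply ms_dist_eq0; auto. Qed.

Lemma nowhere_dense_avoid_ball (N : K -> Prop) (x : K) r :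
  nowhere_dense (ms_open K) N -> 0 < r ->
  exists y r', 0 < r' /\
    (forall z, ms_dist K y z <= r' -> ms_dist K x z < r) /\
    (forall z, ms_dist K y z <= r' -> ~ N z).
Proof.
  intros HN Hr.
  assert (Hy : exists y, ms_dist K x y < r /\ ~ closure (ms_open K) N y).
  { apply NNPP; intros Hno; apply (HN x).
    exists (fun z => ms_dist K x z < r); split; [apply ball_open|].
    split; [rewrite ms_dist_refl; auto|].
    intros y Hy; apply NNPP; eauto. }
  destruct Hy as [y [Hxy Hy]]; unfold closure in Hy.
  apply not_all_ex_not in Hy as [V HV].
  apply imply_to_and in HV as [HVo HV]; apply imply_to_and in HV as [Vy HV].
  destruct (HVo y Vy) as [eps [Heps Hball]].
  set (s := Rmin eps (r - ms_dist K x y)).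
  assert (0 < s) by (apply Rmin_glb_lt; lra).
  pose proof (Rmin_l eps (r - ms_dist K x y)); pose proof (Rmin_r eps (r - ms_dist K x y)).
  exists y, (s / 2); split; [lra|split].
  - intros z Hz; pose proof (ms_dist_tri K x y z); unfold s in *; lra.
  - intros z Hz Nz; apply HV; exists z; split; auto; apply Hball; unfold s in *; lra.
Qed.

Lemma nested_closed_balls_meet (c : nat -> K) (r : nat -> R) :
  compact_metric K -> (forall n, 0 <= r n) ->
  (forall n z, ms_dist K (c (S n)) z <= r (S n) -> ms_dist K (c n) z <= r n) ->
  exists y, forall n, ms_dist K (c n) y <= r n.
Proof.
  intros cK Hr Hnest.
  assert (Hle : forall m n z, (n <= m)%nat ->
             ms_dist K (c m) z <= r m -> ms_dist K (c n) z <= r n).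
  { induction 1; auto. }
  apply NNPP; intros Hno.
  destruct (cK nat (fun n y => r n < ms_dist K (c n) y)) as [l Hl].
  - intros n z Hz; exists (ms_dist K (c n) z - r n); split; [lra|].
    intros w Hw; pose proof (ms_dist_tri K (c n) w z); pose proof (ms_dist_sym K z w); lra.
  - intros y _; apply NNPP; intros Hy; apply Hno; exists y; intros n.
    apply Rnot_lt_le; intros E; apply Hy; eauto.
  - set (M := fold_right max 0%nat l).
    assert (HM : forall n, In n l -> (n <= M)%nat).
    { unfold M; clear; induction l as [|k l IH]; simpl; intros n Hn; [contradiction|].
      destruct Hn as [<-|Hn]; [lia|specialize (IH n Hn); lia]. }
    destruct (Hl (c M) Logic.I) as [n [Hn Hlt]].
    assert (ms_dist K (c n) (c M) <= r n).
    { apply (Hle M); auto; rewrite ms_dist_refl; auto. }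
    lra.
Qed.

Lemma baire_compact (k0 : K) (N : nat -> K -> Prop) :
  compact_metric K -> (forall n, nowhere_dense (ms_open K) (N n)) ->
  ~ (forall x, exists n, N n x).
Proof.
  intros cK HN Hcov.
  destruct (choice (fun (np : nat * (K * R)) (q : K * R) =>
      0 < snd (snd np) -> 0 < snd q /\
      (forall z, ms_dist K (fst q) z <= snd q -> ms_dist K (fst (snd np)) z < snd (snd np)) /\
      (forall z, ms_dist K (fst q) z <= snd q -> ~ N (fst np) z))) as [step Hstep].
  { intros [n [x r]]; simpl.
    destruct (classic (0 < r)) as [Hr|Hr]; [|exists (x, r); intros; contradiction].
    destruct (nowhere_dense_avoid_ball _ x r (HN n) Hr) as [y [r' H]].
    exists (y, r'); auto. }
  set (ball := fix ball n := match n with 0 => (k0, 1) | S n => step (n, ball n) end).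
  assert (Hpos : forall n, 0 < snd (ball n)).
  { induction n; simpl; [lra|apply (Hstep (n, ball n) IHn)]. }
  destruct (nested_closed_balls_meet (fun n => fst (ball n)) (fun n => snd (ball n)) cK)
    as [y Hy].
  - intros n; left; auto.
  - intros n z Hz; left; apply (Hstep (n, ball n) (Hpos n)); auto.
  - destruct (Hcov y) as [n Hn].
    apply (proj2 (proj2 (Hstep (n, ball n) (Hpos n))) y); auto.
    apply (Hy (S n)).
Qed.

End Baire.

(** * Sets containing a translate of every compactum *)

Definition translates_compacta {G : Type} (add : G -> G -> G)
  (isOpen : (G -> Prop) -> Prop) (A : G -> Prop) : Prop :=
  forall (K : MetricSpace) (f : K -> G), compact_metric K -> continuous_into K isOpen f ->
    exists x, forall k, A (add x (f k)).

(* If [A ⊇ x + f(K)] and [A ⊆ B], then [(-x) + B] covers [f(K)], so [K] would be meager. *)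
Lemma not_HaarMeager_of_translates_compacta {G : Type} (add : G -> G -> G) (neg : G -> G)
  (isOpen : (G -> Prop) -> Prop) (A : G -> Prop) :
  (forall x y, y = add (neg x) (add x y)) ->
  translates_compacta add isOpen A -> ~ HaarMeager add isOpen A.
Proof.
  intros Hneg HA [B [_ [HAB [K [f [cK [[k0 _] [cf Hmeager]]]]]]]].
  destruct (HA K f cK cf) as [x Hx].
  destruct (Hmeager (neg x)) as [N [HN Hcov]].
  apply (baire_compact K k0 N cK HN); intros k; apply Hcov.
  exists (add x (f k)); split; auto.
Qed.

Lemma compact_image (K : MetricSpace) {G : Type} (isOpen : (G -> Prop) -> Prop) (f : K -> G) :
  compact_metric K -> continuous_into K isOpen f ->
  compact_in isOpen (fun x => exists k, x = f k).
Proof.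
  intros cK cf I U HU Hcov.
  destruct (cK I (fun i k => U i (f k))) as [l Hl].
  - intros i; apply cf, HU.
  - intros k _; apply (Hcov (f k)); eauto.
  - exists l; intros x [k ->]; apply Hl; auto.
Qed.

Lemma compact_bounded {X : Type} (isOpen : (X -> Prop) -> Prop) (S : X -> Prop) (g : X -> Z) :
  compact_in isOpen S -> (forall m, isOpen (fun x => (Z.abs (g x) < m)%Z)) ->
  exists M, forall x, S x -> (Z.abs (g x) <= M)%Z.
Proof.
  intros cS Hopen.
  destruct (cS Z (fun m x => (Z.abs (g x) < m)%Z) Hopen) as [l Hl].
  { intros x _; exists (Z.abs (g x) + 1)%Z; lia. }
  exists (fold_right Z.max 0%Z l).
  assert (HM : forall m, In m l -> (m <= fold_right Z.max 0 l)%Z).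
  { clear; induction l as [|k l IH]; simpl; intros m Hm; [contradiction|].
    destruct Hm as [<-|Hm]; [lia|specialize (IH m Hm); lia]. }
  intros x Hx; destruct (Hl x Hx) as [m [Hm Hlt]]; specialize (HM m Hm); lia.
Qed.

Lemma openZw_coord n (P : Z -> Prop) : openZw (fun x => P (x n)).
Proof. intros x Hx; exists (S n); intros y Hy; rewrite Hy; auto. Qed.

Lemma openZw2_coord n (P : Z -> Z -> Prop) : openZw2 (fun p => P (fst p n) (snd p n)).
Proof.
  intros p Hp; exists (S n); intros q Hq.
  destruct q as [q1 q2]; destruct (Hq n ltac:(lia)) as [E1 E2]; simpl in *.
  rewrite E1, E2; auto.
Qed.

Lemma compact_Zw_bounded (S : Zw -> Prop) :
  compact_in openZw S -> exists M : Zw, forall x n, S x -> (Z.abs (x n) <= M n)%Z.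
Proof.
  intros cS.
  destruct (choice (fun n M => forall x, S x -> (Z.abs (x n) <= M)%Z)) as [M HM].
  - intros n; apply (compact_bounded _ _ (fun x => x n) cS).
    intros m; apply (openZw_coord n (fun z => Z.abs z < m)%Z).
  - exists M; auto.
Qed.

Lemma compact_Zw2_bounded (S : Zw * Zw -> Prop) :
  compact_in openZw2 S -> exists M : Zw, forall p n, S p ->
    (Z.abs (fst p n) <= M n /\ Z.abs (snd p n) <= M n)%Z.
Proof.
  intros cS.
  destruct (choice (fun n M => forall p, S p ->
    (Z.abs (Z.abs (fst p n) + Z.abs (snd p n)) <= M)%Z)) as [M HM].
  - intros n; apply (compact_bounded _ _ (fun p => Z.abs (fst p n) + Z.abs (snd p n))%Z cS).
    intros m; apply (openZw2_coord n (fun a b => Z.abs (Z.abs a + Z.abs b) < m)%Z).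
  - exists M; intros p n Sp; specialize (HM n p Sp); lia.
Qed.

Lemma addZw_negK x y : y = addZw (fun n => (- x n)%Z) (addZw x y).
Proof. apply functional_extensionality; intros n; unfold addZw; lia. Qed.

Lemma translates_compacta_of_lower_set (A : Zw -> Prop) (s0 : Zw) :
  (forall s, (forall n, (s n <= s0 n)%Z) -> A s) -> translates_compacta addZw openZw A.
Proof.
  intros HA K f cK cf.
  destruct (compact_Zw_bounded _ (compact_image K openZw f cK cf)) as [M HM].
  exists (fun n => (s0 n - M n)%Z); intros k; apply HA; intros n.
  specialize (HM (f k) n (ex_intro _ k eq_refl)); unfold addZw; lia.
Qed.

Lemma not_HaarMeagerZw_of_lower_set (A : Zw -> Prop) (s0 : Zw) :
  (forall s, (forall n, (s n <= s0 n)%Z) -> A s) -> ~ HaarMeagerZw A.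
Proof.
  intros HA; apply (not_HaarMeager_of_translates_compacta _ (fun x n => (- x n)%Z)).
  - apply addZw_negK.
  - exact (translates_compacta_of_lower_set A s0 HA).
Qed.

(** * The set [C] *)

Lemma Cset_section_not_HaarMeager (s : Zw) :
  (forall n, (s n <= 0)%Z) -> ~ HaarMeagerZw (fun t => Cset (s, t)).
Proof.
  intros Hs; apply (not_HaarMeagerZw_of_lower_set _ s).
  intros t Ht n; simpl; split; auto.
Qed.

Lemma Cset_translates_compact (S : Zw * Zw -> Prop) :
  compact_in openZw2 S -> exists x : Zw * Zw, forall p, S p -> Cset (addZw2 x p).
Proof.
  intros cS; destruct (compact_Zw2_bounded S cS) as [M HM].
  (* Shifting by [-M] puts [s] into [[-2M, 0]], shifting by [-3M] puts [t] below [-2M]. *)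
  exists (fun n => (- M n)%Z, fun n => (- 3 * M n)%Z).
  intros [s t] Hp n; specialize (HM _ n Hp); simpl in HM.
  unfold Cset, addZw2, addZw; cbn [fst snd]; lia.
Qed.

Lemma not_HaarMeagerZw2_Cset : ~ HaarMeagerZw2 Cset.
Proof.
  apply (not_HaarMeager_of_translates_compacta _
           (fun x => (fun n => (- fst x n)%Z, fun n => (- snd x n)%Z))).
  - intros [x1 x2] [y1 y2]; unfold addZw2; simpl; f_equal; apply addZw_negK.
  - intros K f cK cf.
    destruct (Cset_translates_compact _ (compact_image K openZw2 f cK cf)) as [x Hx].
    exists x; intros k; apply Hx; eauto.
Qed.

Lemma Borel_of_open_compl {G : Type} (isOpen : (G -> Prop) -> Prop) (S : G -> Prop) :
  isOpen (fun x => ~ S x) -> Borel isOpen S.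
Proof.
  intros HS; apply (Borel_ext _ (fun x => ~ ~ S x)).
  - apply Borel_compl, Borel_open, HS.
  - intros x; split; [apply NNPP|auto].
Qed.

Lemma Cset_section_closed (t : Zw) : openZw (fun s => ~ Cset (s, t)).
Proof.
  intros s Hs; apply not_all_ex_not in Hs as [n Hn].
  exists (S n); intros s' Hs' Hc; apply Hn; specialize (Hc n); simpl in *.
  rewrite <- (Hs' n ltac:(lia)); exact Hc.
Qed.

(* Coordinate [n] jumps by more than the width [|t n|] of the interval [[t n, 0]]. *)
Definition cantor_embed (t : Zw) (a : Cantor) : Zw :=
  fun n => if (a : nat -> bool) n then (Z.abs (t n) + 1)%Z else 0%Z.

Lemma cantor_embed_continuous t : continuous_into Cantor openZw (cantor_embed t).
Proof.
  intros V HV a Va; destruct (HV _ Va) as [m Hm].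
  exists ((1/2)^m); split; [apply half_pow_pos|].
  intros b Hb; apply Hm; intros i Hi; apply agree_of_cantor_dist in Hb.
  unfold cantor_embed; rewrite (Hb i Hi); auto.
Qed.

Lemma cantor_embed_translate_unique t x a b :
  translate addZw x (fun s => Cset (s, t)) (cantor_embed t a) ->
  translate addZw x (fun s => Cset (s, t)) (cantor_embed t b) -> a = b.
Proof.
  intros [s1 [Hs1 E1]] [s2 [Hs2 E2]]; apply functional_extensionality; intros n.
  apply (f_equal (fun g => g n)) in E1, E2.
  specialize (Hs1 n); specialize (Hs2 n).
  unfold cantor_embed, addZw in *; simpl in *.
  destruct (a n), (b n); auto; lia.
Qed.

Lemma Cset_section_HaarMeager (t : Zw) : HaarMeagerZw (fun s => Cset (s, t)).
Proof.
  exists (fun s => Cset (s, t)); split; [apply Borel_of_open_compl, Cset_section_closed|].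
  split; auto.
  exists Cantor, (cantor_embed t); split; [apply Cantor_compact|].
  split; [exists (fun _ => false); auto|].
  split; [apply cantor_embed_continuous|].
  intros x; exists (fun _ a => translate addZw x (fun s => Cset (s, t)) (cantor_embed t a)).
  split; [|intros a Ha; exists 0%nat; exact Ha].
  intros _; apply Cantor_subsingleton_nowhere_dense, cantor_embed_translate_unique.
Qed.

Theorem mainTheorem12 :
  (forall t : Zw, HaarMeagerZw (fun s => Cset (s, t))) /\
  ~ HaarMeagerZw (fun s => ~ HaarMeagerZw (fun t => Cset (s, t))) /\
  ~ HaarMeagerZw2 Cset /\
  (forall Kset : Zw * Zw -> Prop, compact_in openZw2 Kset ->
     exists x : Zw * Zw, forall k, Kset k -> Cset (addZw2 x k)).
Proof.
  split; [exact Cset_section_HaarMeager|].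
  split.
  - apply (not_HaarMeagerZw_of_lower_set _ (fun _ => 0%Z)).
    exact Cset_section_not_HaarMeager.
  - split; [exact not_HaarMeagerZw2_Cset|exact Cset_translates_compact].
Qed.
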